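(* Physically incoherent operations preserve $\mathrm{co}(\mathcal U)$: if $\rho\in\mathrm{co}(\mathcal U)$ and $\Lambda$ is a PIO, then $\Lambda(\rho)\in\mathrm{co}(\mathcal U)$.
   Context: Fixed computational basis $\{|i\rangle\}_{i=1}^d$. $\mathcal U_k$ is the set of uniformly coherent states $|\Psi\rangle=k^{-1/2}\sum_{j\in J}e^{i\theta_j}|j\rangle$, $J\subseteq[d]$, $|J|=k$, $\theta_j\in\mathbb R$; $\mathcal U=\bigcup_{k=1}^d\mathcal U_k$ (as density matrices $|\Psi\rangle\langle\Psi|$), and $\mathrm{co}(\mathcal U)$ its convex hull. PIO: channels $X\mapsto\sum_{\alpha,\beta}p_\alpha U_{\alpha,\beta}\Pi_{\beta|\alpha}X\Pi_{\beta|\alpha}U_{\alpha,\beta}^\dagger$ with $p$ a probability distribution, $U_{\alpha,\beta}$ incoherent unitaries (permutation matrix times diagonal unitary), and for each $\alpha$ incoherent projectors $\Pi_{\beta|\alpha}=\sum_{i\in I_{\beta|\alpha}}|i\rangle\langle i|$ summing to the identity. *)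

From HB Require Import structures.
From mathcomp Require Import all_boot all_order all_algebra.
From mathcomp Require Import all_classical all_reals.
From mathcomp Require Import trigo.
From mathcomp Require Import perm complex.

Set Implicit Arguments.
Unset Strict Implicit.
Unset Printing Implicit Defensive.

Import Order.TTheory GRing.Theory Num.Theory.
Local Open Scope ring_scope.
Local Open Scope complex_scope.

Section Defs.
Variable R : realType.
Local Notation C := R[i].

Definition phase (t : R) : C := (cos t) +i* (sin t).

Definition adjmx m n (A : 'M[C]_(m, n)) : 'M[C]_(n, m) := (map_mx conjc A)^T.

Definition proj_state d (psi : 'cV[C]_d) : 'M[C]_d := psi *m adjmx psi.

Definition unif_vec d (J : {set 'I_d}) (theta : 'I_d -> R) : 'cV[C]_d :=
  \col_j (if j \in J then ((Num.sqrt (#|J|%:R : R))^-1)%:C * phase (theta j) else 0).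

Definition in_Uk d (k : nat) (rho : 'M[C]_d) : Prop :=
  exists (J : {set 'I_d}) (theta : 'I_d -> R),
    #|J| = k /\ rho = proj_state (unif_vec J theta).

Definition in_U d (rho : 'M[C]_d) : Prop :=
  exists k : nat, (1 <= k <= d)%N /\ in_Uk k rho.

Definition in_coU d (rho : 'M[C]_d) : Prop :=
  exists (n : nat) (w : 'I_n -> R) (rhos : 'I_n -> 'M[C]_d),
    (forall i, 0 <= w i) /\ \sum_i w i = 1 /\
    (forall i, in_U (rhos i)) /\
    rho = \sum_i (w i)%:C *: rhos i.

Definition inc_proj d (I : {set 'I_d}) : 'M[C]_d :=
  \sum_(i in I) delta_mx i i.

Definition inc_unitary d (s : {perm 'I_d}) (phi : 'I_d -> R) : 'M[C]_d :=
  perm_mx s *m diag_mx (\row_i phase (phi i)).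

Definition isPIO d (Lam : 'M[C]_d -> 'M[C]_d) : Prop :=
  exists (m n : nat) (p : 'I_m -> R)
         (s : 'I_m -> 'I_n -> {perm 'I_d}) (phi : 'I_m -> 'I_n -> 'I_d -> R)
         (I : 'I_m -> 'I_n -> {set 'I_d}),
    (forall a, 0 <= p a) /\ \sum_a p a = 1 /\
    (forall a, \sum_b inc_proj (I a b) = 1%:M) /\
    forall X : 'M[C]_d,
      Lam X = \sum_a \sum_b (p a)%:C *:
        (inc_unitary (s a b) (phi a b) *m inc_proj (I a b) *m X
           *m inc_proj (I a b) *m adjmx (inc_unitary (s a b) (phi a b))).

End Defs.

(* On a pure state of U, supported on J with arbitrary phases, the Kraus operator
   U_{a,b} Pi_{b|a} of a PIO acts as a restriction to J :&: I_{b|a} followed by a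
   permutation and a phase change, so it produces sqrt(|J :&: I_{b|a}| / |J|) times a
   uniformly coherent vector.  Each term of the PIO therefore maps the state to a
   nonnegative multiple |J :&: I_{b|a}| / |J| of an element of U, and these multiples
   sum to 1 over b because the projectors Pi_{b|a} partition the basis.  Linearity
   then carries convex combinations of elements of U to convex combinations. *)

From mathcomp Require Import all_boot all_order all_algebra.
From mathcomp Require Import all_classical all_reals.
From mathcomp Require Import complex trigo perm ring.
Set Implicit Arguments.
Unset Strict Implicit.
Unset Printing Implicit Defensive.
Import Order.TTheory GRing.Theory Num.Theory.
Local Open Scope ring_scope.
Local Open Scope complex_scope.

Section CoherenceCone.
Variables (R : realType) (d : nat).
Local Notation C := R[i].
Local Notation M := 'M[C]_d.

Definition in_coneU (X : M) (t : R) : Prop :=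
  exists (n : nat) (w : 'I_n -> R) (rhos : 'I_n -> M),
    (forall i, 0 <= w i) /\ \sum_i w i = t /\
    (forall i, in_U (rhos i)) /\
    X = \sum_i (w i)%:C *: rhos i.

Lemma in_coU_coneU (rho : M) : in_coU rho = in_coneU rho 1.
Proof. by []. Qed.

Lemma in_coneU0 : in_coneU 0 0.
Proof.
exists 0%N, (fun=> 0), (fun=> 0).
by split; [case | rewrite !big_ord0; split; [|split; [case|]]].
Qed.

Lemma in_coneU_U (X : M) : in_U X -> in_coneU X 1.
Proof.
move=> UX; exists 1%N, (fun=> 1), (fun=> X).
by rewrite !big_ord1 scale1r.
Qed.

Lemma in_coneUD (X Y : M) s t :
  in_coneU X s -> in_coneU Y t -> in_coneU (X + Y) (s + t).
Proof.
move=> [n1 [w1 [r1 [w1_ge0 [<- [U1 ->]]]]]] [n2 [w2 [r2 [w2_ge0 [<- [U2 ->]]]]]].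
pose glue T (f1 : 'I_n1 -> T) (f2 : 'I_n2 -> T) i :=
  match fintype.split i with inl j => f1 j | inr j => f2 j end.
have glueE T f1 f2 : (forall j, glue T f1 f2 (lshift n2 j) = f1 j) *
                     (forall j, glue T f1 f2 (rshift n1 j) = f2 j).
  by split=> j; rewrite /glue ?(unsplitK (inl _ j)) ?(unsplitK (inr _ j)).
exists (n1 + n2)%N, (glue _ w1 w2), (glue _ r1 r2).
split; first by move=> i; rewrite /glue; case: (fintype.split i).
split; first by rewrite big_split_ord /=; congr (_ + _); apply: eq_bigr => j _; rewrite glueE.
split; first by move=> i; rewrite /glue; case: (fintype.split i).
by rewrite big_split_ord /=; congr (_ + _); apply: eq_bigr => j _; rewrite !glueE.
Qed.

Lemma in_coneUZ (X : M) t c : 0 <= c -> in_coneU X t -> in_coneU (c%:C *: X) (c * t).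
Proof.
move=> c_ge0 [n [w [rhos [w_ge0 [<- [Urhos ->]]]]]].
exists n, (fun i => c * w i), rhos; split; first by move=> i; rewrite mulr_ge0.
split; first by rewrite mulr_sumr.
split=> //; rewrite scaler_sumr; apply: eq_bigr => i _.
by rewrite scalerA rmorphM.
Qed.

Lemma in_coneU_sum n (X : 'I_n -> M) (t : 'I_n -> R) :
  (forall i, in_coneU (X i) (t i)) -> in_coneU (\sum_i X i) (\sum_i t i).
Proof.
move=> XC; apply: (big_rec2 (fun Y s => in_coneU Y s)); first exact: in_coneU0.
by move=> i Y s _; apply: in_coneUD.
Qed.

Lemma in_coneU_comb n (w : 'I_n -> R) (X : 'I_n -> M) (t : 'I_n -> R) :
  (forall i, 0 <= w i) -> (forall i, in_coneU (X i) (t i)) ->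
  in_coneU (\sum_i (w i)%:C *: X i) (\sum_i w i * t i).
Proof. by move=> w_ge0 XC; apply: in_coneU_sum => i; apply: in_coneUZ. Qed.

End CoherenceCone.

Section ComplexMatrices.
Variable R : realType.
Local Notation C := R[i].

Lemma phaseD (a b : R) : phase (a + b) = phase a * phase b.
Proof.
rewrite /phase cosD sinD; apply/eqP; rewrite eq_complex /=.
by apply/andP; split; apply/eqP; ring.
Qed.

Lemma sqrt_natC_neq0 n : (0 < n)%N -> (Num.sqrt (n%:R : R))%:C != 0 :> C.
Proof. by move=> n_gt0; rewrite fmorph_eq0 gt_eqF // sqrtr_gt0 ltr0n. Qed.

Lemma adjmxM m n p (A : 'M[C]_(m, n)) (B : 'M[C]_(n, p)) :
  adjmx (A *m B) = adjmx B *m adjmx A.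
Proof. by rewrite /adjmx map_mxM trmx_mul. Qed.

Lemma adjmxZr m n (c : R) (A : 'M[C]_(m, n)) : adjmx (c%:C *: A) = c%:C *: adjmx A.
Proof. by apply/matrixP => i j; rewrite !mxE rmorphM /= oppr0. Qed.

Lemma inc_projE d (I : {set 'I_d}) : inc_proj R I = diag_mx (\row_i ((i \in I)%:R : C)).
Proof.
rewrite diag_mx_sum_delta /inc_proj big_mkcond; apply: eq_bigr => i _.
by rewrite mxE; case: (i \in I); rewrite ?scale1r ?scale0r.
Qed.

Lemma adjmx_inc_proj d (I : {set 'I_d}) : adjmx (inc_proj R I) = inc_proj R I.
Proof.
rewrite inc_projE; apply/matrixP => i j; rewrite !mxE.
case: (eqVneq i j) => [->|_]; last by rewrite !mulr0n conjc0.
by rewrite !mulr1n; case: (j \in I); rewrite ?conjc1 ?conjc0.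
Qed.

Definition conj_mx m n (A : 'M[C]_(m, n)) (X : 'M[C]_n) : 'M[C]_m := A *m X *m adjmx A.

Lemma conj_mx_comb m n k (A : 'M[C]_(m, n)) (c : 'I_k -> C) (X : 'I_k -> 'M[C]_n) :
  conj_mx A (\sum_i c i *: X i) = \sum_i c i *: conj_mx A (X i).
Proof.
rewrite /conj_mx mulmx_sumr mulmx_suml; apply: eq_bigr => i _.
by rewrite -scalemxAr -scalemxAl.
Qed.

Lemma conj_mx_proj_state m n (A : 'M[C]_(m, n)) (u : 'cV[C]_n) :
  conj_mx A (proj_state u) = proj_state (A *m u).
Proof. by rewrite /conj_mx /proj_state adjmxM !mulmxA. Qed.

Lemma proj_stateZr d (c : R) (u : 'cV[C]_d) :
  proj_state (c%:C *: u) = (c ^+ 2)%:C *: proj_state u.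
Proof. by rewrite /proj_state adjmxZr -scalemxAl -scalemxAr scalerA -rmorphM expr2. Qed.

End ComplexMatrices.

Section PIO.
Variable R : realType.
Local Notation C := R[i].

Lemma inc_unitary_proj_unif_vec d (s : {perm 'I_d}) phi (I J : {set 'I_d}) theta :
  inc_unitary s phi *m inc_proj R I *m unif_vec J theta =
  (Num.sqrt #|J :&: I|%:R / Num.sqrt #|J|%:R)%:C *:
    unif_vec (s @^-1: (J :&: I)) (fun i => theta (s i) + phi (s i)).
Proof.
apply/matrixP => i j; rewrite /inc_unitary -!mulmxA -row_permE inc_projE !mul_diag_mx.
rewrite !mxE card_preimset; last exact: perm_inj.
rewrite !inE; case: (boolP (s i \in J)) => sJ; case: (boolP (s i \in I)) => sI /=;
  rewrite ?mul0r ?mulr0 // mul1r phaseD.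
have /sqrt_natC_neq0 JI_neq0 : (0 < #|J :&: I|)%N.
  by apply/card_gt0P; exists (s i); rewrite inE sJ.
have /sqrt_natC_neq0 J_neq0 : (0 < #|J|)%N by apply/card_gt0P; exists (s i).
rewrite rmorphM !fmorphV /=; field.
by rewrite JI_neq0 J_neq0.
Qed.

Definition kraus_sum d m n (p : 'I_m -> R) (K : 'I_m -> 'I_n -> 'M[C]_d) (X : 'M[C]_d) :=
  \sum_a \sum_b (p a)%:C *: conj_mx (K a b) X.

Lemma kraus_sum_comb d m n p (K : 'I_m -> 'I_n -> 'M[C]_d) k (w : 'I_k -> R) X :
  kraus_sum p K (\sum_i (w i)%:C *: X i) = \sum_i (w i)%:C *: kraus_sum p K (X i).
Proof.
rewrite /kraus_sum.
under eq_bigr do under eq_bigr do rewrite conj_mx_comb scaler_sumr.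
under eq_bigr do rewrite exchange_big /=.
rewrite exchange_big; apply: eq_bigr => i _ /=.
rewrite scaler_sumr; apply: eq_bigr => a _; rewrite scaler_sumr.
by apply: eq_bigr => b _; rewrite !scalerA mulrC.
Qed.

Lemma proj_unif_vec_in_coneU d (J : {set 'I_d}) (theta : 'I_d -> R) :
  in_coneU (proj_state (unif_vec J theta)) (0 < #|J|)%N%:R.
Proof.
have [J0|J_gt0] := posnP #|J|.
  have -> : unif_vec J theta = 0 by apply/matrixP => i j; rewrite !mxE (card0_eq J0).
  by rewrite /proj_state mul0mx; apply: in_coneU0.
apply: in_coneU_U; exists #|J|; split; last by exists J, theta.
by rewrite J_gt0 /=; apply: leq_trans (max_card _) _; rewrite card_ord.
Qed.

Lemma in_coneU_conj_inc_unif d (s : {perm 'I_d}) phi (I J : {set 'I_d}) theta :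
  in_coneU (conj_mx (inc_unitary s phi *m inc_proj R I) (proj_state (unif_vec J theta)))
           (#|J :&: I|%:R / #|J|%:R).
Proof.
rewrite conj_mx_proj_state inc_unitary_proj_unif_vec proj_stateZr.
set c := Num.sqrt _ / Num.sqrt _; have c_ge0 : 0 <= c by rewrite divr_ge0 ?sqrtr_ge0.
have := in_coneUZ (exprn_ge0 2 c_ge0) (proj_unif_vec_in_coneU (s @^-1: (J :&: I)) _).
rewrite card_preimset; last exact: perm_inj.
rewrite expr_div_n !sqr_sqrtr ?ler0n //.
by case: posnP => [->|_]; rewrite ?mul0r ?mulr1.
Qed.

Lemma sum_card_setI_partition d n (I : 'I_n -> {set 'I_d}) (J : {set 'I_d}) :
  \sum_b inc_proj R (I b) = 1%:M -> (\sum_b #|J :&: I b|)%N = #|J|.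
Proof.
move=> I_part.
have cover1 j : (\sum_b (j \in I b))%N = 1%N.
  have /matrixP/(_ j j) := I_part; rewrite summxE mxE eqxx /=.
  under eq_bigr do rewrite inc_projE !mxE eqxx mulr1n.
  by rewrite -natr_sum => /eqP; rewrite pnatr_eq1 => /eqP.
have cardI b : #|J :&: I b| = (\sum_(j in J) (j \in I b))%N.
  rewrite -sum1_card big_mkcond [RHS]big_mkcond /=.
  by apply: eq_bigr => j _; rewrite inE; case: (j \in J); case: (j \in I b).
under eq_bigr do rewrite cardI.
by rewrite exchange_big /= -sum1_card; apply: eq_bigr => j _; apply: cover1.
Qed.

Lemma in_coneU_pio_state d m n (p : 'I_m -> R) s phi (I : 'I_m -> 'I_n -> {set 'I_d}) sigma :
  (forall a, 0 <= p a) -> \sum_a p a = 1 ->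
  (forall a, \sum_b inc_proj R (I a b) = 1%:M) -> in_U sigma ->
  in_coneU (kraus_sum p (fun a b => inc_unitary (s a b) (phi a b) *m inc_proj R (I a b)) sigma) 1.
Proof.
move=> p_ge0 sum_p I_part [k [/andP[k_gt0 _] [J [theta [cardJ ->]]]]].
have <- : \sum_a p a * \sum_b (#|J :&: I a b|%:R / #|J|%:R) = 1.
  rewrite -[RHS]sum_p; apply: eq_bigr => a _.
  rewrite -mulr_suml -natr_sum sum_card_setI_partition // divff ?mulr1 //.
  by rewrite cardJ pnatr_eq0 -lt0n.
rewrite /kraus_sum; under eq_bigr do rewrite -scaler_sumr.
apply: in_coneU_comb => // a; apply: in_coneU_sum => b.
exact: in_coneU_conj_inc_unif.
Qed.

End PIO.

Theorem lemma11 (R : realType) (d : nat) (Lam : 'M[R[i]]_d -> 'M[R[i]]_d)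
  (rho : 'M[R[i]]_d) :
  isPIO Lam -> in_coU rho -> in_coU (Lam rho).
Proof.
move=> [m [n [p [s [phi [I [p_ge0 [sum_p [I_part LamE]]]]]]]]].
pose K a b := inc_unitary (s a b) (phi a b) *m inc_proj R (I a b).
have {}LamE X : Lam X = kraus_sum p K X.
  rewrite LamE; apply: eq_bigr => a _; apply: eq_bigr => b _.
  by rewrite /conj_mx /K adjmxM adjmx_inc_proj !mulmxA.
rewrite !in_coU_coneU => -[k [w [rhos [w_ge0 [sum_w [U_rhos ->]]]]]].
have := in_coneU_comb w_ge0 (fun i => in_coneU_pio_state s phi p_ge0 sum_p I_part (U_rhos i)).
by rewrite LamE kraus_sum_comb (eq_bigr w (fun i _ => mulr1 (w i))) sum_w.
Qed.
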